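(* Let $l:\mathbb{R}\to\mathbb{R}$ be continuous and $l_o(x):=\frac12(l(x)-l(-x))$. Then there exist $c_1,d_1,d_2\in\mathbb{R}$ such that $$\limsup_{x\to+\infty}\big(l_o(x)-c_1x-d_1\big)=0\quad\text{and}\quad\limsup_{x\to-\infty}\big(l_o(x)-c_1x-d_2\big)=0$$ if and only if there exist $q,q'\in\mathbb{R}$ such that $l_o(x)\le q'x+q$ for every $x\in\mathbb{R}$. *)

From HB Require Import structures.
From mathcomp Require Import all_boot all_order all_algebra.
From mathcomp Require Import all_classical all_reals all_analysis.
Set Implicit Arguments. Unset Strict Implicit. Unset Printing Implicit Defensive.
Import Order.TTheory GRing.Theory Num.Theory.
Import numFieldNormedType.Exports.
Local Open Scope ring_scope.

Definition odd_part (R : realType) (l : R -> R) : R -> R :=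
  fun x => (l x - l (- x)) / 2.

From HB Require Import structures.
From mathcomp Require Import all_boot all_order all_algebra.
From mathcomp Require Import all_classical all_reals all_analysis.
From mathcomp Require Import lra.
Import Order.TTheory GRing.Theory Num.Theory.
Import numFieldNormedType.Exports.
Local Open Scope classical_set_scope.
Local Open Scope ring_scope.

(* Put g x := l_o x - c x.  If the two limsups vanish, g is eventually at most
   d_i + 1 near +oo and near -oo, and bounded on the compact interval in
   between by continuity, so g is bounded above.  Conversely, since l_o is odd,
   the affine upper bound at -x is an affine lower bound at x, so
   l_o x - q' x is bounded; a bounded function has a finite limsup along any
   proper filter, and subtracting it makes the limsup 0. *)

Section limf_esup_real.
Context {T : choiceType} {X : filteredType T} {R : realType}.
Local Open Scope ereal_scope.

Lemma ereal_sup_addr (S : set (\bar R)) (a : R) :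
  ereal_sup [set y + a%:E | y in S] = ereal_sup S + a%:E.
Proof.
apply/le_anti/andP; split.
  by apply: ge_ereal_sup => _ [y Sy <-]; exact/leeD2r/ereal_sup_ubound.
rewrite -leeBrDr//; apply: ge_ereal_sup => y Sy.
by rewrite leeBrDr//; apply: ereal_sup_ubound; exists y.
Qed.

Lemma ereal_inf_addr (S : set (\bar R)) (a : R) :
  ereal_inf [set y + a%:E | y in S] = ereal_inf S + a%:E.
Proof.
apply/le_anti/andP; split; last first.
  by apply: le_ereal_inf_tmp => _ [y Sy <-]; exact/leeD2r/ereal_inf_lbound.
rewrite -leeBlDr//; apply: le_ereal_inf_tmp => y Sy.
by rewrite leeBlDr//; apply: ereal_inf_lbound; exists y.
Qed.

Lemma limf_esupDr (f : X -> \bar R) (F : set_system X) (a : R) :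
  limf_esup (fun x => f x + a%:E) F = limf_esup f F + a%:E.
Proof.
rewrite !limf_esupE -ereal_inf_addr image_comp; congr ereal_inf.
by apply: eq_imagel => V _ /=; rewrite -ereal_sup_addr image_comp.
Qed.

Lemma limf_esup_lt (f : X -> \bar R) (F : set_system X) {FF : Filter F}
    (a : \bar R) :
  limf_esup f F < a -> \forall x \near F, f x < a.
Proof.
rewrite limf_esupE => /ereal_inf_lt[_ [V FV <-]] supVa.
apply: filterS FV => x Vx; apply: le_lt_trans supVa.
by apply: ereal_sup_ubound; exists x.
Qed.

Lemma limf_esup_fin_num (g : X -> R) (F : set_system X) (q : R) :
  ProperFilter F -> (forall x, `|g x| <= q)%R ->
  limf_esup (fun x => (g x)%:E) F \is a fin_num.
Proof.
move=> FF gq; rewrite fin_numElt; apply/andP; split.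
  rewrite limf_esupE; apply: (@lt_le_trans _ _ (- q)%:E); first exact: ltNyr.
  apply: le_ereal_inf_tmp => _ [V FV <-].
  have [x Vx] := filter_ex FV.
  apply: (@le_trans _ _ (g x)%:E); first by rewrite lee_fin lerNnormlW.
  by apply: ereal_sup_ubound; exists x.
rewrite limf_esupE; apply: (@le_lt_trans _ _ q%:E); last exact: ltry.
apply: (@le_trans _ _ (ereal_sup [set (g x)%:E | x in setT])).
  by apply: ereal_inf_lbound; exists setT => //; exact: filterT.
by apply: ge_ereal_sup => _ [x _ <-]; rewrite lee_fin (le_trans (ler_norm _)).
Qed.

Lemma limf_esup_centered {g : X -> R} {F : set_system X} {q : R} :
  ProperFilter F -> (forall x, `|g x| <= q)%R ->
  exists d, limf_esup (fun x => (g x - d)%:E) F = 0.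
Proof.
move=> FF gq; set L := limf_esup (fun x => (g x)%:E) F.
have L_fin : L \is a fin_num by exact: limf_esup_fin_num gq.
exists (fine L); under eq_fun do rewrite EFinB.
by rewrite limf_esupDr -/L EFinN fineK// subee.
Qed.

End limf_esup_real.

Lemma continuous_bounded_above {R : realType} {g : R -> R} {b1 b2 : R} :
  continuous g -> (\forall x \near +oo, g x <= b1) ->
  (\forall x \near -oo, g x <= b2) -> exists M, forall x, g x <= M.
Proof.
move=> g_cont [M1 [_ gM1]] [M2 [_ gM2]].
set N := `|M1| + `|M2|.
have M1N : M1 <= N by rewrite (le_trans (ler_norm M1)) ?lerDl.
have NM2 : - N <= M2 by rewrite lerNl (le_trans (ler_norm (- M2))) ?normrN ?lerDr.
have N_ge0 : 0 <= N := addr_ge0 (normr_ge0 M1) (normr_ge0 M2).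
have N_ge : - N <= N by lra.
have [c _ gc] := EVT_max N_ge (continuous_subspaceT g_cont).
exists (Num.max (Num.max b1 b2) (g c)) => x; rewrite !le_max.
have [M1x|xM1] := ltP M1 x; first by rewrite gM1.
have [xM2|M2x] := ltP x M2; first by rewrite gM2 ?orbT.
by rewrite gc ?orbT// in_itv /=; apply/andP; split; lra.
Qed.

Lemma odd_partN (R : realType) (l : R -> R) (x : R) :
  odd_part l (- x) = - odd_part l x.
Proof. by rewrite /odd_part opprK -mulNr opprB. Qed.

Lemma odd_part_continuous {R : realType} {l : R -> R} :
  continuous l -> continuous (odd_part l).
Proof.
move=> l_cont x; apply: cvgMr_tmp; apply: cvgB; first exact: l_cont.
by apply: continuous_comp; [exact: oppr_continuous | exact: l_cont].
Qed.

Lemma odd_part_le_affine {R : realType} {l : R -> R} {q q' : R} :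
  (forall x, odd_part l x <= q' * x + q) ->
  forall x, `|odd_part l x - q' * x| <= q.
Proof.
move=> lq x; have := lq x; have := lq (- x); rewrite odd_partN => lqN lqx.
by rewrite ler_norml; apply/andP; split; lra.
Qed.

Theorem lemma19 (R : realType) (l : R -> R) (hl : continuous l) :
  (exists c1 d1 d2 : R,
      limf_esup (fun x : R => ((odd_part l x - c1 * x - d1)%:E)) (+oo%R : set_system R) = 0%E /\
      limf_esup (fun x : R => ((odd_part l x - c1 * x - d2)%:E)) (-oo%R : set_system R) = 0%E)
  <->
  (exists q q' : R, forall x : R, odd_part l x <= q' * x + q).
Proof.
split.
- case=> c [d1 [d2 [sup_pinfty sup_ninfty]]].
  set g := fun x => odd_part l x - c * x.
  have g_cont : continuous g.
    by move=> x; apply: cvgB; [exact: odd_part_continuous | exact: cvgMl_tmp].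
  have near_pinfty : \forall x \near +oo, g x <= d1 + 1.
    have : (limf_esup (fun x => (g x - d1)%:E) (+oo%R : set_system R) < 1%:E)%E.
      by rewrite sup_pinfty lte01.
    by move/limf_esup_lt; apply: filterS => x; rewrite lte_fin; lra.
  have near_ninfty : \forall x \near -oo, g x <= d2 + 1.
    have : (limf_esup (fun x => (g x - d2)%:E) (-oo%R : set_system R) < 1%:E)%E.
      by rewrite sup_ninfty lte01.
    by move/limf_esup_lt; apply: filterS => x; rewrite lte_fin; lra.
  have [M gM] := continuous_bounded_above g_cont near_pinfty near_ninfty.
  by exists M, c => x; rewrite -lerBlDl; exact: gM.
- case=> q [q' lq].
  have gq := odd_part_le_affine lq.
  have [d1 sup_pinfty] := limf_esup_centered proper_pinfty_nbhs gq.
  have [d2 sup_ninfty] := limf_esup_centered proper_ninfty_nbhs gq.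
  by exists q', d1, d2.
Qed.
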